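(* Let $\mathcal{C}$ be a permutation class with bounded horizontal path-width. Then there is a constant $\alpha$ depending only on $\mathcal{C}$ such that for every $\pi\in\mathcal{C}$ and every subset $S$ of the diagram of $\pi$, we have $\mathrm{intv}_y(S)\le\alpha\cdot\mathrm{intv}_x(S)$.
   Context: Permutations of length $n$ are identified with their diagrams $\{(i,\pi_i)\}$; a permutation class is a set of permutations closed under pattern containment. The intervalicity of $A\subseteq[n]$ is the least number of disjoint integer intervals with union $A$; for a point set $S$, $\mathrm{intv}_x(S)$ and $\mathrm{intv}_y(S)$ denote the intervalicities of its projections onto the $x$- and $y$-axes, and its grid-complexity is their maximum. The horizontal path-width of $\pi$ is the maximum over $i\in[n]$ of the grid-complexity of $\{(1,\pi_1),\dots,(i,\pi_i)\}$; $\mathcal{C}$ has bounded horizontal path-width if this is bounded over all $\pi\in\mathcal{C}$. *)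

From mathcomp Require Import all_boot all_fingroup.
Set Implicit Arguments. Unset Strict Implicit. Unset Printing Implicit Defensive.

(* Permutations of length n are elements of 'S_n = {perm 'I_n}; positions and
   values are indexed 0..n-1 (a harmless shift from 1..n). *)

Definition contains n k (pi : 'S_n) (sigma : 'S_k) : Prop :=
  exists f : 'I_k -> 'I_n,
    (forall i j : 'I_k, (i < j)%N -> (f i < f j)%N) /\
    (forall i j : 'I_k, (pi (f i) < pi (f j))%N = (sigma i < sigma j)%N).

Definition perm_class (C : forall n, 'S_n -> Prop) : Prop :=
  forall n k (pi : 'S_n) (sigma : 'S_k), C n pi -> contains pi sigma -> C k sigma.

Definition is_interval_cover n (A : {set 'I_n}) (s : seq ('I_n * 'I_n)) : bool :=
  [&& all (fun p : 'I_n * 'I_n => (p.1 <= p.2)%N) s,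
      pairwise (fun p q : 'I_n * 'I_n => (p.2 < q.1)%N || (q.2 < p.1)%N) s &
      [forall x : 'I_n, (x \in A) == has (fun p : 'I_n * 'I_n => (p.1 <= x <= p.2)%N) s]].

Definition has_cover_of_size n (A : {set 'I_n}) (k : nat) : bool :=
  [exists s : k.-tuple ('I_n * 'I_n), is_interval_cover A s].

Lemma has_cover_exists n (A : {set 'I_n}) : exists k, has_cover_of_size A k.
Proof.
exists #|A|; apply/existsP.
have sz : size [seq (i, i) | i <- enum A] == #|A| by rewrite size_map -cardE.
exists (Tuple sz); rewrite /is_interval_cover /=; apply/and3P; split.
- by apply/allP => p /mapP [i _ ->] /=.
- rewrite pairwise_map; apply: (sub_pairwise (r := [rel x y | x != y])).
    by move=> x y /=; rewrite neq_ltn.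
  by rewrite -uniq_pairwise enum_uniq.
- apply/forallP => x; rewrite has_map /=; apply/eqP.
  apply/idP/hasP => [xA | [i iA /andP [h1 h2]]].
    by exists x; rewrite ?mem_enum //= !leqnn.
  have -> : x = i by apply/val_inj/eqP; rewrite eqn_leq h1 h2.
  by rewrite -mem_enum.
Qed.

Definition intv n (A : {set 'I_n}) : nat := ex_minn (has_cover_exists A).

Definition diagram n (pi : 'S_n) : {set 'I_n * 'I_n} := [set (i, pi i) | i : 'I_n].
Definition proj_x n (S : {set 'I_n * 'I_n}) : {set 'I_n} := [set p.1 | p in S].
Definition proj_y n (S : {set 'I_n * 'I_n}) : {set 'I_n} := [set p.2 | p in S].
Definition intv_x n (S : {set 'I_n * 'I_n}) := intv (proj_x S).
Definition intv_y n (S : {set 'I_n * 'I_n}) := intv (proj_y S).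
Definition grid_complexity n (S : {set 'I_n * 'I_n}) := maxn (intv_x S) (intv_y S).

Definition prefix n (pi : 'S_n) (i : nat) : {set 'I_n * 'I_n} :=
  [set (j, pi j) | j : 'I_n & (j < i)%N].
Definition hpw n (pi : 'S_n) : nat := \max_(i < n) grid_complexity (prefix pi i.+1).

Definition bounded_hpw (C : forall n, 'S_n -> Prop) : Prop :=
  exists K, forall n (pi : 'S_n), C n pi -> hpw pi <= K.

From Pilot Require Import Defs.
From mathcomp Require Import all_boot all_fingroup.
Set Implicit Arguments. Unset Strict Implicit. Unset Printing Implicit Defensive.

(* The intervalicity of A ⊆ [n] equals the number of "starts" of
   A, i.e. the x ∈ A with x - 1 ∉ A; it is also bounded below by the number of
   "ends" (x ∈ A with x + 1 ∉ A).  Let K = hpw π and S ⊆ diagram π, with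
   projections X and Y.  Every start y of Y lies above some x ∈ X, and x lies
   in a maximal run [t, e] of X starting at a start t of X.  Then either y is a
   start of the y-projection of the prefix of length e + 1, or y - 1 belongs to
   that prefix but not to Y; in the latter case y - 1 comes from a column < t,
   so y - 1 is an end of the y-projection of the prefix of length t.  Each
   prefix projection has at most K starts and at most K ends, so each start of
   X accounts for at most 2K starts of Y, whence intv_y S ≤ 2K · intv_x S. *)

Section Runs.

Variables (n : nat) (A : {set 'I_n}).

(* Membership in A of a natural number, convenient for the neighbours x ± 1. *)
Definition in_nat (m : nat) : bool := [exists z in A, val z == m].

Lemma in_natE (z : 'I_n) : in_nat z = (z \in A).
Proof.
apply/existsP/idP => [[w /andP [wA /eqP e]]|zA]; last by exists z; rewrite zA eqxx.
by have -> : z = w by apply/val_inj.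
Qed.

Definition starts : {set 'I_n} := [set x in A | (val x == 0) || ~~ in_nat (val x).-1].
Definition ends : {set 'I_n} := [set x in A | ~~ in_nat (val x).+1].

(* A subset of A whose elements are pairwise separated by gaps of A meets every
   interval of a cover at most once, hence has at most intv A elements. *)
Lemma separated_le_intv (T : {set 'I_n}) :
  T \subset A ->
  (forall x y, x \in T -> y \in T -> (x < y)%N ->
     exists z, (x <= z <= y)%N /\ ~~ in_nat z) -> #|T| <= intv A.
Proof.
move=> TA sep; rewrite /intv; case: ex_minnP => k /existsP [s /and3P [_ _ /forallP cov]] _.
pose a (x : 'I_n) (p : 'I_n * 'I_n) := (p.1 <= x <= p.2)%N.
pose g (x : 'I_n) := find (a x) s.
have hasx x : x \in T -> has (a x) s by move=> /(subsetP TA) xA; rewrite -(eqP (cov x)).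
have g_inj : {in T &, injective g}.
  suff noeq : forall x y, x \in T -> y \in T -> (x < y)%N -> g x != g y.
    move=> x y xT yT gxy; case: (ltngtP x y) => [lt|lt|e]; last exact: val_inj.
    - by have := noeq x y xT yT lt; rewrite gxy eqxx.
    - by have := noeq y x yT xT lt; rewrite gxy eqxx.
  move=> x y xT yT xy; apply/eqP => gxy.
  have /andP [h1 _] := nth_find (x, x) (hasx x xT).
  have /andP [_ h2] := nth_find (x, x) (hasx y yT).
  rewrite -/(g x) in h1; rewrite -/(g y) -gxy in h2.
  case: (sep x y xT yT xy) => z [/andP [xz zy] nz].
  have zn : (z < n)%N by apply: leq_ltn_trans zy (ltn_ord y).
  suff : Ordinal zn \in A by rewrite -in_natE (negbTE nz).
  rewrite (eqP (cov _)); apply/hasP; exists (nth (x, x) s (g x)).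
    by apply: mem_nth; rewrite -has_find hasx.
  by rewrite /a /= (leq_trans h1 xz) (leq_trans zy h2).
rewrite cardE -(size_map g) -(size_tuple s) -(size_iota 0 (size s)).
apply: uniq_leq_size.
  by rewrite map_inj_in_uniq ?enum_uniq // => x y; rewrite !mem_enum; apply: g_inj.
by move=> m /mapP [x]; rewrite mem_enum => xT ->; rewrite mem_iota -has_find hasx.
Qed.

Lemma starts_le_intv : #|starts| <= intv A.
Proof.
apply: separated_le_intv; first by apply/subsetP => x; rewrite inE => /andP [].
move=> x y _; rewrite inE => /andP [_ /orP [/eqP y0|ny]] xy; first by move: xy; rewrite y0.
exists y.-1; rewrite ny -ltnS prednK ?xy ?leq_pred //.
exact: leq_ltn_trans xy.
Qed.

Lemma ends_le_intv : #|ends| <= intv A.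
Proof.
apply: separated_le_intv; first by apply/subsetP => x; rewrite inE => /andP [].
by move=> x y; rewrite inE => /andP [_ nx] _ xy; exists x.+1; rewrite nx leqnSn xy.
Qed.

Definition run (x j : 'I_n) : bool := [forall z : 'I_n, (x <= z <= j)%N ==> (z \in A)].

Definition run_end (x : 'I_n) : 'I_n := [arg max_(j > x | run x j) val j].

Lemma runP (x j z : 'I_n) : run x j -> (x <= z <= j)%N -> z \in A.
Proof. by move=> /forallP /(_ z) /implyP. Qed.

Lemma run_refl (x : 'I_n) : x \in A -> run x x.
Proof.
move=> xA; apply/forallP => z; apply/implyP => h.
by have -> : z = x by apply/val_inj/eqP; rewrite eqn_leq andbC.
Qed.

Lemma run_endP (x : 'I_n) :
  x \in A -> run x (run_end x) /\ forall j, run x j -> (j <= run_end x)%N.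
Proof. by move=> xA; rewrite /run_end; case: arg_maxnP; first exact: run_refl. Qed.

Lemma start_in (x : 'I_n) : x \in starts -> x \in A.
Proof. by rewrite inE => /andP []. Qed.

Lemma run_end_lt_start (x y : 'I_n) :
  x \in starts -> y \in starts -> (x < y)%N -> (run_end x < y)%N.
Proof.
move=> xs ys xy; rewrite ltnNge; apply/negP => ye.
have [runx _] := run_endP (start_in xs).
move: ys; rewrite inE => /andP [_ /orP [/eqP y0|]]; first by move: xy; rewrite y0.
have y1n : (y.-1 < n)%N by apply: leq_ltn_trans (leq_pred _) (ltn_ord y).
rewrite -[y.-1]/(val (Ordinal y1n)) in_natE (runP runx) //=.
by rewrite -ltnS prednK ?xy ?(leq_trans (leq_pred _) ye) //; apply: leq_ltn_trans xy.
Qed.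

Lemma exists_start (x : 'I_n) :
  x \in A -> exists t : 'I_n, [/\ t \in starts, (t <= x)%N & run t x].
Proof.
move=> xA; pose P m := (m <= x)%N && [forall z : 'I_n, (m <= z <= x)%N ==> (z \in A)].
have exP : exists m, P m by exists x; rewrite /P leqnn; apply: run_refl.
case: (ex_minnP exP) => m /andP [mx /forallP hm] mmin.
have hz (z : 'I_n) : (m <= z <= x)%N -> z \in A by move=> h; have := hm z; rewrite h.
have mn : (m < n)%N by apply: leq_ltn_trans mx (ltn_ord x).
exists (Ordinal mn); split => //; last by apply/forallP => z; apply/implyP; apply: hz.
rewrite inE hz ?leqnn ?mx //=.
case: (posnP m) => [->//|m0]; apply/orP; right; apply/negP => /existsP [w /andP [wA /eqP wm]].
suff : (m <= m.-1)%N by rewrite leqNgt ltn_predL m0.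
apply: mmin; rewrite /P (leq_trans (leq_pred m) mx) /=.
apply/forallP => z; apply/implyP => /andP [h1 h2].
case: (ltngtP z m.-1) h1 => // [e|e] _; first by apply: hz; rewrite h2 andbT -(prednK m0).
by have -> : z = w by apply/val_inj; rewrite /= wm e.
Qed.

(* The maximal runs [t, run_end t], t a start, form an interval cover of A. *)
Lemma intv_le_starts : intv A <= #|starts|.
Proof.
rewrite /intv; case: ex_minnP => k _ kmin; apply: kmin.
pose s := [seq (x, run_end x) | x <- enum starts].
have sz : size s == #|starts| by rewrite size_map -cardE.
apply/existsP; exists (Tuple sz); apply/and3P; split => /=.
- apply/allP => p /mapP [x]; rewrite mem_enum => xs -> /=.
  by have [_ ->] := run_endP (start_in xs); last exact/run_refl/start_in.
- rewrite pairwise_map; apply: (@sub_in_pairwise _ (mem starts) [rel x y | x != y]).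
  + move=> x y xs ys /=; rewrite neq_ltn => /orP [] lt.
    * by rewrite (run_end_lt_start xs ys lt).
    * by rewrite (run_end_lt_start ys xs lt) orbT.
  + by apply/allP => x; rewrite mem_enum.
  + by rewrite -uniq_pairwise enum_uniq.
- apply/forallP => x; rewrite has_map; apply/eqP; apply/idP/hasP => /=.
    move=> /exists_start [t [ts tx runt]]; exists t; rewrite ?mem_enum //= tx.
    by have [_ ->] := run_endP (start_in ts).
  move=> [t]; rewrite mem_enum => ts h.
  by have [runt _] := run_endP (start_in ts); apply: runP runt h.
Qed.

Lemma intv_starts : intv A = #|starts|.
Proof. by apply/eqP; rewrite eqn_leq intv_le_starts starts_le_intv. Qed.

End Runs.

Lemma card_bigcup_le (I T : finType) (P : {pred I}) (F : I -> {set T}) :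
  #|\bigcup_(i in P) F i| <= \sum_(i in P) #|F i|.
Proof.
apply: (big_ind2 (fun (U : {set T}) m => #|U| <= m)) => [|U1 m1 U2 m2 h1 h2|i _] //.
- by rewrite cards0.
- exact: leq_trans (leq_of_leqif (leq_card_setU _ _)) (leq_add h1 h2).
Qed.

Section Diagram.

Variables (n : nat) (pi : 'S_n).

Definition prefix_y (c : nat) : {set 'I_n} := proj_y (Defs.prefix pi c).

Lemma mem_prefix_y (c : nat) (y : 'I_n) : (y \in prefix_y c) = ((pi^-1)%g y < c)%N.
Proof.
apply/imsetP/idP => [[p /imsetP [j]] | h].
  by rewrite inE => jc -> -> /=; rewrite permK.
exists ((pi^-1)%g y, y) => //; apply/imsetP; exists ((pi^-1)%g y); rewrite ?inE ?permKV //.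
Qed.

Lemma intv_prefix_y (c : nat) : (c <= n)%N -> intv (prefix_y c) <= hpw pi.
Proof.
case: c => [|c] cn.
  rewrite intv_starts; suff -> : starts (prefix_y 0) = set0 by rewrite cards0.
  by apply/setP => y; rewrite !inE mem_prefix_y ltn0.
apply: leq_trans (leq_maxr (intv_x _) _) _.
exact: (@leq_bigmax _ (fun i : 'I_n => grid_complexity (Defs.prefix pi i.+1)) (Ordinal cn)).
Qed.

Variable S : {set 'I_n * 'I_n}.

(* Successor in 'I_n, only applied to elements that are not the last one. *)
Definition succ (w : 'I_n) : 'I_n := insubd w (val w).+1.

(* The candidate starts of proj_y S charged to the start t of proj_x S. *)
Definition charged_starts (t : 'I_n) : {set 'I_n} :=
  starts (prefix_y (run_end (proj_x S) t).+1) :|: succ @: ends (prefix_y t).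

Lemma card_charged_starts (t : 'I_n) : #|charged_starts t| <= hpw pi + hpw pi.
Proof.
apply: leq_trans (leq_of_leqif (leq_card_setU _ _)) (leq_add _ _).
  by apply: leq_trans (starts_le_intv _) (intv_prefix_y _).
apply: leq_trans (leq_imset_card _ _) _.
by apply: leq_trans (ends_le_intv _) (intv_prefix_y (ltnW (ltn_ord t))).
Qed.

Hypothesis S_diagram : S \subset diagram pi.

Lemma mem_proj_x (x : 'I_n) : (x \in proj_x S) = ((x, pi x) \in S).
Proof.
apply/imsetP/idP => [[p pS ->] | h]; last by exists (x, pi x).
by have := subsetP S_diagram p pS; case/imsetP => i _ pe; rewrite pe /= -pe.
Qed.

Lemma mem_proj_y (y : 'I_n) : (y \in proj_y S) = ((pi^-1)%g y \in proj_x S).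
Proof.
rewrite mem_proj_x; apply/imsetP/idP => [[p pS ->]| h].
  by have := subsetP S_diagram p pS; case/imsetP => i _ pe; rewrite pe /= permK -pe.
by exists ((pi^-1)%g y, pi ((pi^-1)%g y)); last rewrite permKV.
Qed.

(* The combinatorial heart: every start of proj_y S is charged to the start of
   the maximal x-run containing the column below it. *)
Lemma starts_y_charged :
  starts (proj_y S) \subset \bigcup_(t in starts (proj_x S)) charged_starts t.
Proof.
apply/subsetP => y; rewrite inE => /andP [yY ystart].
set X := proj_x S; set x := (pi^-1)%g y.
have xX : x \in X by rewrite -mem_proj_y.
have [t [ts tx runtx]] := exists_start xX.
apply/bigcupP; exists t => //; set e := run_end X t.
have [runte emax] := run_endP (start_in ts).
have y_in : y \in prefix_y e.+1 by rewrite mem_prefix_y ltnS (emax _ runtx).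
rewrite inE; case ys: (y \in starts _) => //=.
move: ys; rewrite inE y_in /= => /negbT; rewrite negb_or negbK.
move=> /andP [y0 /existsP [w /andP [w_in /eqP wy]]].
have yw : val y = (val w).+1 by rewrite wy prednK ?lt0n.
(* The row just below y is covered by a column left of t, since it misses S. *)
have wt : ((pi^-1)%g w < t)%N.
  rewrite ltnNge; apply/negP => tw; move: ystart; rewrite (negbTE y0) /= -wy in_natE.
  by rewrite mem_proj_y (runP runte) //= tw -ltnS -mem_prefix_y.
apply/imsetP; exists w; last by apply/val_inj; rewrite val_insubd -yw ltn_ord.
by rewrite inE mem_prefix_y wt /= -yw -/x in_natE mem_prefix_y -leqNgt tx.
Qed.

End Diagram.

Theorem mainTheorem11 (C : forall n, 'S_n -> Prop) :
  perm_class C -> bounded_hpw C ->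
  exists alpha : nat, forall n (pi : 'S_n), C n pi ->
    forall S : {set 'I_n * 'I_n}, S \subset diagram pi ->
      intv_y S <= alpha * intv_x S.
Proof.
move=> _ [K hK]; exists (K + K) => n pi Cpi S Sd.
have hpwK := hK n pi Cpi.
rewrite /intv_y /intv_x intv_starts.
apply: leq_trans (subset_leq_card (starts_y_charged Sd)) _.
apply: leq_trans (card_bigcup_le _ _) _.
apply: (@leq_trans (\sum_(t in starts (proj_x S)) (K + K))).
  by apply: leq_sum => t _; rewrite (leq_trans (card_charged_starts pi S t)) ?leq_add.
by rewrite sum_nat_const mulnC leq_mul2l starts_le_intv orbT.
Qed.
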